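(* Let $N'$ be a positive integer. For every row index $i$ with $2\le i\le N'$, the sum of the entries in the $i$-th row of $A_1^{-1}$ is $0$, and the sum of the entries in the $i$-th row of $A_2^{-1}$ is $0$.
   Context: $(a_{c,d})_{c,d\ge1}$ are the integers defined by: $a_{c,1}=1$ for $c\ge1$; $a_{1,d}=a_{2,d}=0$ for $d\ge2$; $a_{3,2}=-2$ and $a_{3,d}=0$ for $d\ge3$; and $a_{c+2,d+1}=a_{c+1,d+1}-a_{c,d}$ for $c\ge2$, $d\ge1$. $A_1$ and $A_2$ are the $N'\times N'$ matrices with $(i,j)$ entries $a_{2i-1,j}$ and $a_{2i,j}$ respectively; they are lower triangular with all diagonal entries nonzero, hence invertible. *)

From HB Require Import structures.
From mathcomp Require Import all_boot all_order all_algebra.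
Set Implicit Arguments. Unset Strict Implicit. Unset Printing Implicit Defensive.
Import Order.TTheory GRing.Theory Num.Theory.
Local Open Scope ring_scope.

(* acoef c d = a_{c,d} for c, d >= 1 (1-indexed as in the paper);
   values at c = 0 or d = 0 are junk (0) and never used. *)
Fixpoint acoef (c d : nat) {struct c} : int :=
  match c with
  | 0 => 0
  | 1 => if d == 1%N then 1 else 0
  | 2 => if d == 1%N then 1 else 0
  | 3 => if d == 1%N then 1 else if d == 2%N then -2 else 0
  | S ((S ((S (S k)) as c2)) as c1) =>
      match d with
      | 0 => 0
      | 1 => 1
      | S d' => acoef c1 d - acoef c2 d'
      end
  end.

(* A_1 and A_2 (0-indexed: row i, column j correspond to paper's i+1, j+1),
   viewed over the rationals so that the inverse makes sense. *)
Definition A1 (N : nat) : 'M[rat]_N :=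
  \matrix_(i < N, j < N) (acoef (2 * i.+1 - 1) j.+1)%:~R.
Definition A2 (N : nat) : 'M[rat]_N :=
  \matrix_(i < N, j < N) (acoef (2 * i.+1) j.+1)%:~R.

(* The first column of A_1 and of A_2 consists of ones, i.e. A e_1 = (1,...,1)^T,
   so A^-1 (1,...,1)^T = e_1: every row of A^-1 other than the first sums to 0.
   It remains to see that A_1 and A_2 are invertible: a_{c,d} vanishes as soon
   as c + 1 < 2d, which makes both matrices lower triangular, and the diagonal
   entries a_{2k+1,k+1} and a_{2k+2,k+1} are computed explicitly along the
   recurrence and are nonzero. *)
From HB Require Import structures.
From mathcomp Require Import all_boot all_order all_algebra.
From mathcomp Require Import zify ring.
Set Implicit Arguments. Unset Strict Implicit. Unset Printing Implicit Defensive.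
Import GRing.Theory Num.Theory.
Local Open Scope ring_scope.

Lemma invmx_rowsum (R : comUnitRingType) n (A : 'M[R]_n) (j0 i : 'I_n) :
  A \in unitmx -> (forall k, A k j0 = 1) -> \sum_j invmx A i j = (i == j0)%:R.
Proof.
move=> A_unit A_col1.
have := congr1 (fun M : 'M[R]_n => M i j0) (mulVmx A_unit).
rewrite !mxE => <-.
by apply: eq_bigr => j _; rewrite A_col1 mulr1.
Qed.

Lemma trigmx_unit (F : fieldType) n (A : 'M[F]_n) :
  is_trig_mx A -> (forall k, A k k != 0) -> A \in unitmx.
Proof.
move=> A_trig A_diag.
by rewrite unitmxE unitfE det_trig //; apply/prodf_neq0 => k _.
Qed.

Lemma acoefSS c d : acoef c.+4 d.+2 = acoef c.+3 d.+2 - acoef c.+2 d.+1.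
Proof. by []. Qed.

Lemma acoef_col1 c : acoef c.+1 1 = 1.
Proof. by case: c => [|[|[|c]]]. Qed.

Lemma acoef_eq0 c d : (c.+1 < d.*2)%N -> acoef c d = 0.
Proof.
elim/ltn_ind: c d => -[|[|[|[|c]]]] IH d lt_cd //.
- by case: d lt_cd => [|[|d]].
- by case: d lt_cd => [|[|d]].
- by case: d lt_cd => [|[|[|d]]].
case: d lt_cd => [|[|d]] lt_cd //.
by rewrite acoefSS !IH ?subr0 //; move: lt_cd; rewrite -!muln2; lia.
Qed.

Lemma acoef_diag k :
  acoef k.*2.+3 k.+2 = (-1) ^+ k.+1 * 2 /\
  acoef k.*2.+2 k.+1 = (-1) ^+ k * (k.*2.+1)%:R.
Proof.
elim: k => [|k [IH_odd IH_even]]; first by rewrite expr1 expr0 mulN1r mul1r.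
have [above_odd above_even] : acoef k.*2.+3 k.+3 = 0 /\ acoef k.*2.+2 k.+2 = 0.
  by split; apply: acoef_eq0; rewrite -!muln2; lia.
rewrite doubleS !acoefSS IH_odd IH_even above_odd above_even.
split; first by rewrite subrr sub0r [in RHS]exprS mulN1r mulNr.
by rewrite !exprS -[k.*2.+3]addn2 natrD; ring.
Qed.

Lemma A1E n (i j : 'I_n) : A1 n i j = (acoef i.*2.+1 j.+1)%:~R.
Proof. by rewrite mxE -muln2; congr (acoef _ _)%:~R; lia. Qed.

Lemma A2E n (i j : 'I_n) : A2 n i j = (acoef i.*2.+2 j.+1)%:~R.
Proof. by rewrite mxE -muln2; congr (acoef _ _)%:~R; lia. Qed.

Lemma A1_trig n : is_trig_mx (A1 n).
Proof.
apply/is_trig_mxP => i j lt_ij.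
by rewrite A1E acoef_eq0 //; move: lt_ij; rewrite -!muln2; lia.
Qed.

Lemma A2_trig n : is_trig_mx (A2 n).
Proof.
apply/is_trig_mxP => i j lt_ij.
by rewrite A2E acoef_eq0 //; move: lt_ij; rewrite -!muln2; lia.
Qed.

Lemma A1_diag_neq0 n (k : 'I_n) : A1 n k k != 0.
Proof.
case: k => -[|k] lt_kn; rewrite A1E intr_eq0 //.
by rewrite doubleS (acoef_diag k).1 mulf_neq0 ?signr_eq0.
Qed.

Lemma A2_diag_neq0 n (k : 'I_n) : A2 n k k != 0.
Proof.
by rewrite A2E intr_eq0 (acoef_diag k).2 mulf_neq0 ?signr_eq0 ?pnatr_eq0.
Qed.

Lemma A1_col0 n (k : 'I_n.+1) : A1 n.+1 k ord0 = 1.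
Proof. by rewrite A1E acoef_col1. Qed.

Lemma A2_col0 n (k : 'I_n.+1) : A2 n.+1 k ord0 = 1.
Proof. by rewrite A2E acoef_col1. Qed.

Lemma A1_unit n : A1 n \in unitmx.
Proof. exact: trigmx_unit (A1_trig n) (@A1_diag_neq0 n). Qed.

Lemma A2_unit n : A2 n \in unitmx.
Proof. exact: trigmx_unit (A2_trig n) (@A2_diag_neq0 n). Qed.

Theorem corollary3p6 (N : nat) (hN : (0 < N)%N) (i : 'I_N) (hi : (1 <= i)%N) :
  \sum_(j < N) invmx (A1 N) i j = 0 /\ \sum_(j < N) invmx (A2 N) i j = 0.
Proof.
case: N hN i hi => [|n] // _ i hi.
have i_neq0 : (i == ord0) = false by apply/negbTE; rewrite -val_eqE -lt0n.
split.
- by rewrite (invmx_rowsum i (A1_unit _) (@A1_col0 n)) i_neq0.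
- by rewrite (invmx_rowsum i (A2_unit _) (@A2_col0 n)) i_neq0.
Qed.
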